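(* Let $(p_{n,m})_{n,m\in\omega}$ be a matrix of terms such that: (1) each $p_{n,m}$ depends only on variables $x_{i,j}$ with $i<n$; (2) for every $n$ there are infinitely many $m$ with $p_{n,m}=^*0$ (the constant term); (3) for all $i,j$ there are infinitely many $n$ such that for every $M\in\omega$ there are $m_0,\dots,m_k>M$ such that $x_{i,j}$ is determined by $p_{n,m_0},\dots,p_{n,m_k}$. Then there is $q\in R_{\omega\cdot\omega+\omega}$ with $\sigma(q)=\bar p$, i.e. $q_{n,m}=p_{n,m}$ for all $n,m\in\omega$.
   Context: Throughout, $\delta$ denotes a nonzero countable limit ordinal. Terms: variables are $x_{l,k}$ ($l,k\in\omega$), each taking values in $\{0,1\}$. A term $t$ is given by a finite sequence of variables $(v_0,\dots,v_{r-1})$ and a function $F:2^r\to2$; a variable $v$ is identified with the term $((v),\mathrm{id})$. An assignment $a$ maps variables to $\{0,1\}$ and extends to terms by $t\circ a=F(v_0\circ a,\dots,v_{r-1}\circ a)$. Terms are identified modulo $t=^*s$ iff $t\circ a=s\circ a$ for all assignments $a$. A term depends only on variables in $Y$ if it is $=^*$ to a term using only variables from $Y$. A term or variable $s$ is determined by terms $t_0,\dots,t_n$ if for all assignments $a,b$, $(t_i\circ a)_{i\le n}=(t_i\circ b)_{i\le n}$ implies $s\circ a=s\circ b$. The forcing $\tilde P$: a condition $\tilde p$ has height $\mathrm{ht}(\tilde p)<\omega_1$ and consists of, for every limit $\delta<\mathrm{ht}(\tilde p)$ and $n,m,k\in\omega$: a cofinal $\nu_{\delta,n,m}\subseteq\delta$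 of order type $\omega$, with $\nu_{\delta,n,m_1}\cap\nu_{\delta,n,m_2}=\emptyset$ for $m_1\ne m_2$; a strictly increasing $j_{\delta,n,m}:\omega\to\omega$; and a surjective $f_{\delta,n,m,k}:2^{[j_{\delta,n,m}(k),\,j_{\delta,n,m}(k+1)-1]}\to2$; ordered by extension. For $\eta$ into $2$ with domain containing $\nu_{\delta,n,m}$, with $\zeta_i$ the $i$-th element of $\nu_{\delta,n,m}$, $g_{\delta,n,m,k}(\eta)=f_{\delta,n,m,k}((\eta(\zeta_i))_{j_{\delta,n,m}(k)\le i<j_{\delta,n,m}(k+1)})$. The set $R$: $R=\bigcup_{\delta<\omega_1}R_{\delta+\omega}$, where $p\in R_{\delta+\omega}$ consists of $\tilde p\in\tilde P$ with $\mathrm{ht}(\tilde p)=\delta+1$ and terms $\bar p=(p_{n,\alpha})_{n\in\omega,\alpha<\delta+\omega}$ such that $p_{n,\delta+m}=x_{n,m}$; for $\alpha<\delta$, $p_{n,\alpha}$ depends only on variables $x_{l,k}$ with $l<n$; and for all $n,m\in\omega$ and all limit $\alpha\le\delta$ there is $k_0$ such that for every assignment $a$, $p_{n,\alpha+m}\circ a=g_{\alpha,n,m,k}((p_{n+1,\zeta}\circ a)_{\zeta<\alpha})$ for all $k\ge k_0$ (computed from $\tilde p$). For $p\in R$, $\sigma(p)=(p_{n,m})_{n,m\in\omega}$. *)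

From mathcomp Require Import all_boot.
Set Implicit Arguments. Unset Strict Implicit. Unset Printing Implicit Defensive.

(* the variable x_{l,k} is encoded as the pair (l,k) *)
Definition var := (nat * nat)%type.
Definition assignment := nat -> nat -> bool.

(* a term: a finite sequence of variables (v_0,...,v_{r-1}) and F : 2^r -> 2,
   where 2^r is represented by boolean lists (only lists of length r matter) *)
Record term := Term { tvars : seq var; tfun : seq bool -> bool }.

Definition eval (t : term) (a : assignment) : bool :=
  tfun t [seq a v.1 v.2 | v <- tvars t].

Definition teq (t s : term) : Prop := forall a, eval t a = eval s a.

Definition var_term (l k : nat) : term := Term [:: (l, k)] (fun bs => head false bs).

Definition zero_term : term := Term [::] (fun _ => false).

Definition depends_only (Y : var -> Prop) (t : term) : Prop :=
  exists s, teq t s /\ forall v, v \in tvars s -> Y v.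

Definition determined (s : term) (ts : seq term) : Prop :=
  forall a b, [seq eval t a | t <- ts] = [seq eval t b | t <- ts] -> eval s a = eval s b.

(* OFin k j = omega*k + j ;  OTop j = omega*omega + j *)
Inductive ord := OFin (k j : nat) | OTop (j : nat).

Definition olt (x y : ord) : Prop :=
  match x, y with
  | OFin k j, OFin k' j' => (k < k')%N \/ (k = k' /\ (j < j')%N)
  | OFin _ _, OTop _ => True
  | OTop _, OFin _ _ => False
  | OTop j, OTop j' => (j < j')%N
  end.

Definition is_limit (x : ord) : Prop :=
  match x with
  | OFin k j => (0 < k)%N /\ j = 0%N
  | OTop j => j = 0%N
  end.

Definition oadd (x : ord) (m : nat) : ord :=
  match x with
  | OFin k j => OFin k (j + m)
  | OTop j => OTop (j + m)
  end.

Definition omega_omega : ord := OTop 0.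

(* data for every limit alpha <= omega*omega (values at non-limits are irrelevant):
   nu alpha n m i  = the i-th element zeta_i of nu_{alpha,n,m}
   jj alpha n m    = j_{alpha,n,m}
   ff alpha n m k  = f_{alpha,n,m,k}, acting on the list
                     (eta(zeta_i))_{j(k) <= i < j(k+1)} *)
Record cond := Cond {
  nu : ord -> nat -> nat -> nat -> ord;
  jj : ord -> nat -> nat -> nat -> nat;
  ff : ord -> nat -> nat -> nat -> seq bool -> bool }.

Definition cond_ok (c : cond) : Prop :=
  forall alpha, is_limit alpha -> forall n m,
    (forall i, olt (nu c alpha n m i) alpha) /\
    (forall i, olt (nu c alpha n m i) (nu c alpha n m i.+1)) /\
    (forall beta, olt beta alpha -> exists i, olt beta (nu c alpha n m i)) /\
    (forall m', m <> m' -> forall i i', nu c alpha n m i <> nu c alpha n m' i') /\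
    (forall k, (jj c alpha n m k < jj c alpha n m k.+1)%N) /\
    (forall k (b : bool), exists bs : seq bool,
        size bs = (jj c alpha n m k.+1 - jj c alpha n m k)%N /\ ff c alpha n m k bs = b).

Definition g (c : cond) (alpha : ord) (n m k : nat) (eta : ord -> bool) : bool :=
  ff c alpha n m k
     [seq eta (nu c alpha n m i)
     | i <- iota (jj c alpha n m k) (jj c alpha n m k.+1 - jj c alpha n m k)].

Record Relt := RElt { rcond : cond; rterm : nat -> ord -> term }.

Definition in_R_oo (q : Relt) : Prop :=
  cond_ok (rcond q) /\
  (forall n m, teq (rterm q n (oadd omega_omega m)) (var_term n m)) /\
  (forall n alpha, olt alpha omega_omega ->
     depends_only (fun v => (v.1 < n)%N) (rterm q n alpha)) /\
  (forall n m alpha, is_limit alpha ->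
     exists k0, forall (a : assignment) k, (k0 <= k)%N ->
       eval (rterm q n (oadd alpha m)) a
       = g (rcond q) alpha n m k (fun zeta => eval (rterm q n.+1 zeta) a)).

(* Every term [q_(n, alpha)] with [omega <= alpha < omega*omega] is either [0] or a variable
   [x_(i, j)] with [i < n]: at level [k >= 1] of row [n], a slot carries [x_(i, j)] exactly
   when [i < n] and row [n + k] determines [x_(i, j)] by arbitrarily late terms.  Keeping
   [row + level] fixed, the limit [omega*(k+2)] just copies level [k+1] of the next row.
   At [omega*omega + m] the variable [x_(n, m)] is copied from the levels [N - n - 1] of
   row [n + 1], where [N] ranges over the infinitely many rows that determine [x_(n, m)].
   At [omega + s], row [n + 1] of [p] is cut into consecutive finite windows, shared
   out among the slots, each window determining the slot's value; the decoder reads the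
   value off the window, and a term [p_(n+1, m) = 0] inside the window of an empty slot
   keeps the decoder surjective. *)

From Stdlib Require Import Cantor ClassicalEpsilon.
From mathcomp Require Import all_boot zify.
Set Implicit Arguments. Unset Strict Implicit. Unset Printing Implicit Defensive.

Definition asbool (P : Prop) : bool := if excluded_middle_informative P then true else false.

Lemma asboolP (P : Prop) : reflect P (asbool P).
Proof. by rewrite /asbool; case: excluded_middle_informative => h; constructor. Qed.

Definition cantor_pair (x y : nat) : nat := Cantor.to_nat (x, y).
Definition cantor_unpair : nat -> nat * nat := Cantor.of_nat.

Lemma cantor_pairK x y : cantor_unpair (cantor_pair x y) = (x, y).
Proof. exact: Cantor.cancel_of_to. Qed.

Lemma cantor_pair_inj x y x' y' : cantor_pair x y = cantor_pair x' y' -> x = x' /\ y = y'.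
Proof. by move/(congr1 cantor_unpair); rewrite !cantor_pairK => -[-> ->]. Qed.

Lemma leq_cantor_pair_r x y : y <= cantor_pair x y.
Proof. by have /leP := Cantor.to_nat_non_decreasing x y; rewrite /cantor_pair; lia. Qed.

Lemma cantor_pair_ltr x y : cantor_pair x y < cantor_pair x y.+1.
Proof.
have := Cantor.to_nat_spec x y; have := Cantor.to_nat_spec x y.+1.
by rewrite /cantor_pair => *; apply/ltP; nia.
Qed.

Lemma cantor_pair_monor x : {homo cantor_pair x : y y' / y < y'}.
Proof. exact: homo_ltn ltn_trans (cantor_pair_ltr x). Qed.

Section IntervalConcatenation.
Variables lo sz : nat -> nat.
Hypothesis sz_gt0 : forall t, 0 < sz t.
Hypothesis lo_sz : forall t, lo t + sz t <= lo t.+1.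

Definition block_start t := \sum_(u < t) sz u.

Fixpoint block_pos (i : nat) : nat * nat :=
  if i is i'.+1 then
    let: (t, d) := block_pos i' in if d.+1 < sz t then (t, d.+1) else (t.+1, 0)
  else (0, 0).

Definition block_enum i := lo (block_pos i).1 + (block_pos i).2.

Lemma block_startS t : block_start t.+1 = block_start t + sz t.
Proof. by rewrite /block_start big_ord_recr. Qed.

Lemma block_pos_lt i : (block_pos i).2 < sz (block_pos i).1.
Proof.
elim: i => [|i] /=; first exact: sz_gt0.
by case: (block_pos i) => t d /= _; case: ifP.
Qed.

Lemma block_pos_shift t d :
  block_pos (block_start t) = (t, 0) -> d < sz t -> block_pos (block_start t + d) = (t, d).
Proof.
move=> h0; elim: d => [|d IHd] hd; first by rewrite addn0.
by rewrite addnS /= IHd ?hd // ltnW.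
Qed.

Lemma block_pos_start t : block_pos (block_start t) = (t, 0).
Proof.
elim: t => [|t IH]; first by rewrite /block_start big_ord0.
by rewrite block_startS -(prednK (sz_gt0 t)) addnS /= block_pos_shift // ?prednK ?ltnn.
Qed.

Lemma block_pos_at t d : d < sz t -> block_pos (block_start t + d) = (t, d).
Proof. exact/block_pos_shift/block_pos_start. Qed.

Lemma block_enum_lt i : block_enum i < block_enum i.+1.
Proof.
rewrite /block_enum /=; have := block_pos_lt i.
case: (block_pos i) => t d /= hd; case: ifP => _ /=; first by rewrite addnS.
by rewrite addn0; apply: leq_trans (lo_sz t); rewrite ltn_add2l.
Qed.

Lemma leq_block_enum i : i <= block_enum i.
Proof. by elim: i => // i IH; apply: leq_ltn_trans IH (block_enum_lt i). Qed.

Lemma block_enum_mem i :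
  lo (block_pos i).1 <= block_enum i < lo (block_pos i).1 + sz (block_pos i).1.
Proof. by rewrite /block_enum leq_addr ltn_add2l block_pos_lt. Qed.

Lemma block_start_lt t : block_start t < block_start t.+1.
Proof. by rewrite block_startS -addn1 leq_add2l sz_gt0. Qed.

Lemma block_start_diff t : block_start t.+1 - block_start t = sz t.
Proof. by rewrite block_startS addKn. Qed.

Lemma block_enum_block t :
  [seq block_enum i | i <- iota (block_start t) (block_start t.+1 - block_start t)]
  = iota (lo t) (sz t).
Proof.
rewrite block_start_diff; apply: (@eq_from_nth _ 0); rewrite size_map !size_iota //.
move=> d hd; rewrite (nth_map 0) ?size_iota // !nth_iota //.
by rewrite /block_enum block_pos_at.
Qed.

End IntervalConcatenation.

Section Construction.
Variable p : nat -> nat -> term.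

Definition tail_determines (n i j : nat) : Prop := forall M, exists ms : seq nat,
  ms <> [::] /\ all (fun m => M < m) ms /\ determined (var_term i j) [seq p n m | m <- ms].

Hypothesis p_depends : forall n m, depends_only (fun v => v.1 < n) (p n m).
Hypothesis p_zero : forall n M, exists m, M < m /\ teq (p n m) zero_term.
Hypothesis p_determines : forall i j N, exists n, N < n /\ tail_determines n i j.

(* The second component of [s] is a free tag, so that every variable has infinitely many slots. *)
Definition slot_var (s : nat) : nat * nat := cantor_unpair (cantor_unpair s).1.

Definition active (k N s : nat) : Prop :=
  (slot_var s).1 < N /\ tail_determines (N + k) (slot_var s).1 (slot_var s).2.

Definition level_term (k N s : nat) : term :=
  if asbool (active k N s) then var_term (slot_var s).1 (slot_var s).2 else zero_term.

Lemma level_term_active k N s :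
  active k N s -> level_term k N s = var_term (slot_var s).1 (slot_var s).2.
Proof. by rewrite /level_term; case: asboolP. Qed.

Lemma level_term_inactive k N s : ~ active k N s -> level_term k N s = zero_term.
Proof. by rewrite /level_term; case: asboolP. Qed.

Lemma eval_level_term_false k N s : eval (level_term k N s) (fun _ _ => false) = false.
Proof. by rewrite /level_term; case: asbool. Qed.

Lemma level_term_depends k N s : depends_only (fun v => v.1 < N) (level_term k N s).
Proof.
case: (asboolP (active k N s)) => [ha|hna].
  rewrite level_term_active //; eexists; split; first by [].
  by move=> v; rewrite inE => /eqP ->; case: ha.
by rewrite level_term_inactive //; exists zero_term.
Qed.

Definition next_row (n m N : nat) : nat :=
  epsilon (inhabits 0) (fun N' => N < N' /\ tail_determines N' n m).

Definition good_row (n m t : nat) : nat := iter t.+1 (next_row n m) n.+1.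

Lemma next_rowP n m N : N < next_row n m N /\ tail_determines (next_row n m N) n m.
Proof. exact: epsilon_spec (p_determines n m N). Qed.

Lemma good_row_lt n m t : good_row n m t < good_row n m t.+1.
Proof. exact: (next_rowP n m _).1. Qed.

Lemma good_row_gt n m t : n.+1 + t < good_row n m t.
Proof.
elim: t => [|t IH]; first by rewrite addn0; exact: (next_rowP n m _).1.
by rewrite addnS; apply: leq_ltn_trans IH (good_row_lt n m t).
Qed.

Definition top_slot (n m : nat) : nat := cantor_pair (cantor_pair n m) 0.

Lemma level_term_top n m t :
  level_term (good_row n m t - n.+1) n.+1 (top_slot n m) = var_term n m.
Proof.
have hvar : slot_var (top_slot n m) = (n, m) by rewrite /slot_var !cantor_pairK.
have ha : active (good_row n m t - n.+1) n.+1 (top_slot n m).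
  rewrite /active hvar /= subnKC; first by split=> //; exact: (next_rowP n m _).2.
  by apply: ltnW; apply: leq_ltn_trans (good_row_gt n m t); rewrite leq_addr.
by rewrite level_term_active // hvar.
Qed.

(* An inactive slot is sent to a slot for [x_(N+1, 0)], which is inactive in row [N + 1]. *)
Definition descend_slot (k N s t : nat) : nat :=
  let v := if asbool (active k N s) then (cantor_unpair s).1 else cantor_pair N.+1 0 in
  cantor_pair v (cantor_pair s t).

Lemma level_term_descend k N s t :
  level_term k.+1 N.+1 (descend_slot k.+2 N s t) = level_term k.+2 N s.
Proof.
rewrite /descend_slot; case: (asboolP (active k.+2 N s)) => ha.
  have hvar : slot_var (cantor_pair (cantor_unpair s).1 (cantor_pair s t)) = slot_var s.
    by rewrite /slot_var cantor_pairK.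
  rewrite !level_term_active ?hvar //.
  by case: ha => hi; rewrite /active hvar addSnnS; split=> //; apply: ltnW.
by rewrite !level_term_inactive // /active /slot_var !cantor_pairK ltnn => -[].
Qed.

Definition window (N M c : nat) (a : assignment) : seq bool :=
  [seq eval (p N.+1 m) a | m <- iota M.+1 (c - M)].

Definition good_block (N s M c : nat) : Prop :=
  [/\ M < c,
      forall a b, window N M c a = window N M c b ->
        eval (level_term 1 N s) a = eval (level_term 1 N s) b &
      (exists a, eval (level_term 1 N s) a) \/
      (exists2 m, M < m <= c & teq (p N.+1 m) zero_term)].

Lemma window_eq_at N M c a b m :
  window N M c a = window N M c b -> M < m <= c -> eval (p N.+1 m) a = eval (p N.+1 m) b.
Proof. by move=> /eq_in_map hab hm; apply: hab; rewrite mem_iota; lia. Qed.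

Lemma good_block_exists N s M : exists c, good_block N s M c.
Proof.
case: (asboolP (active 1 N s)) => [ha|hna]; last first.
  have [m [hm hz]] := p_zero N.+1 M.
  exists m; split=> //; first by rewrite level_term_inactive.
  by right; exists m; rewrite ?hm ?leqnn.
have [_ hdet] := ha; rewrite addn1 in hdet.
have [ms [ms_ne [/allP ms_gt ms_det]]] := hdet M.
have le_max m : m \in ms -> m <= \max_(m' <- ms) m' by move=> hm; apply: leq_bigmax_seq.
exists (\max_(m <- ms) m); split.
- have [m hm] : exists m, m \in ms.
    by case: ms ms_ne {ms_gt ms_det le_max} => // m ms; exists m; exact: mem_head.
  exact: leq_trans (ms_gt m hm) (le_max m hm).
- move=> a b hab; rewrite level_term_active //; apply: ms_det; rewrite -!map_comp.
  by apply/eq_in_map => m hm; apply: (window_eq_at hab); rewrite ms_gt // le_max.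
- by left; exists (fun _ _ => true); rewrite level_term_active.
Qed.

Definition block_end (N s M : nat) : nat := epsilon (inhabits 0) (good_block N s M).

Lemma block_endP N s M : good_block N s M (block_end N s M).
Proof. exact: epsilon_spec (good_block_exists N s M). Qed.

(* Row [N + 1] is cut into consecutive windows; the [u]-th one serves slot [(cantor_unpair u).1]. *)
Fixpoint bound (N u : nat) : nat :=
  if u is u'.+1 then block_end N (cantor_unpair u').1 (bound N u') else 0.

Lemma bound_lt N u : bound N u < bound N u.+1.
Proof. by case: (block_endP N (cantor_unpair u).1 (bound N u)). Qed.

Lemma leq_bound N : {homo bound N : u v / u <= v}.
Proof. exact: homo_leq leqnn leq_trans (fun u => ltnW (bound_lt N u)). Qed.

Lemma bound_disjoint N u u' x :
  bound N u < x <= bound N u.+1 -> bound N u' < x <= bound N u'.+1 -> u = u'.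
Proof.
move=> /andP[hx1 hx2] /andP[hx1' hx2']; case: (ltngtP u u') => // huu.
- by have := leq_bound N huu; lia.
- by have := leq_bound N huu; lia.
Qed.

Lemma good_block_bound N s t :
  good_block N s (bound N (cantor_pair s t)) (bound N (cantor_pair s t).+1).
Proof. by rewrite [bound N _.+1]/= cantor_pairK; exact: block_endP. Qed.

Definition block_lo (N s t : nat) : nat := (bound N (cantor_pair s t)).+1.
Definition block_size (N s t : nat) : nat :=
  bound N (cantor_pair s t).+1 - bound N (cantor_pair s t).

Lemma block_size_gt0 N s t : 0 < block_size N s t.
Proof. by rewrite subn_gt0 bound_lt. Qed.

Lemma block_lo_size N s t : block_lo N s t + block_size N s t <= block_lo N s t.+1.
Proof.
have := bound_lt N (cantor_pair s t); have := leq_bound N (cantor_pair_ltr s t).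
by rewrite /block_lo /block_size; lia.
Qed.

Definition decoder (N s M c : nat) (bs : seq bool) : bool :=
  ~~ asbool (exists a, window N M c a = bs /\ ~~ eval (level_term 1 N s) a).

Lemma decoder_window N s M c a :
  good_block N s M c -> decoder N s M c (window N M c a) = eval (level_term 1 N s) a.
Proof.
case=> _ hdet _; rewrite /decoder; case: asboolP => [[a' [ha' /negbTE]]|hno].
  by rewrite -(hdet _ _ ha').
by apply/esym/negP => /negP hna; apply: hno; exists a.
Qed.

Lemma decoder_surj N s M c (b : bool) :
  good_block N s M c -> exists bs, size bs = c - M /\ decoder N s M c bs = b.
Proof.
move=> hgood; have size_window a : size (window N M c a) = c - M by rewrite size_map size_iota.
case: b; last first.
  by exists (window N M c (fun _ _ => false)); rewrite decoder_window // eval_level_term_false.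
case: (hgood) => hMc _ [[a ha]|[m hm hz]].
  by exists (window N M c a); rewrite decoder_window.
exists (nseq (c - M) true); rewrite size_nseq /decoder; split=> //.
apply/negP => /asboolP [a [hwin _]].
have : eval (p N.+1 m) a \in window N M c a by apply: map_f; rewrite mem_iota; lia.
by rewrite hwin hz mem_nseq; case/andP.
Qed.

Lemma block_enum_window n m i : exists t,
  bound n (cantor_pair m t) < block_enum (block_lo n m) (block_size n m) i
    <= bound n (cantor_pair m t).+1.
Proof.
have hx := block_enum_mem (block_lo n m) (block_size_gt0 n m) i.
set x := block_enum _ _ i in hx *; set t := (block_pos _ i).1 in hx; exists t.
by have := bound_lt n (cantor_pair m t); rewrite /block_lo /block_size in hx; lia.
Qed.

Lemma block_enum_disjoint n m m' i i' :
  block_enum (block_lo n m) (block_size n m) i = block_enum (block_lo n m') (block_size n m') i' ->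
  m = m'.
Proof.
have [t ht] := block_enum_window n m i; have [t' ht'] := block_enum_window n m' i'.
by move=> hii'; rewrite hii' in ht; have [] := cantor_pair_inj (bound_disjoint ht ht').
Qed.

Definition nu_q (alpha : ord) (n m i : nat) : ord :=
  match alpha with
  | OTop _ => OFin (good_row n m i - n.+1) (top_slot n m)
  | OFin 0 _ => OFin 0 0
  | OFin 1 _ => OFin 0 (block_enum (block_lo n m) (block_size n m) i)
  | OFin k.+2 _ => OFin k.+1 (descend_slot k.+2 n m i)
  end.

Definition jj_q (alpha : ord) (n m t : nat) : nat :=
  if alpha is OFin 1 _ then block_start (block_size n m) t else t.

Definition ff_q (alpha : ord) (n m t : nat) : seq bool -> bool :=
  if alpha is OFin 1 _ then decoder n m (bound n (cantor_pair m t)) (bound n (cantor_pair m t).+1)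
  else head false.

Definition term_q (n : nat) (alpha : ord) : term :=
  match alpha with
  | OTop j => var_term n j
  | OFin 0 j => p n j
  | OFin k j => level_term k n j
  end.

Definition q : Relt := RElt (Cond nu_q jj_q ff_q) term_q.

Lemma q_cond_ok : cond_ok (rcond q).
Proof.
have head_surj k (b : bool) : exists bs, size bs = k.+1 - k /\ head false bs = b.
  by exists [:: b]; rewrite subSnn.
move=> [[|[|k]] j [//] _ ->|j ->] n m /=.
- have hsz := block_size_gt0 n m; have hlo := block_lo_size n m.
  split=> [i|]; first by left.
  split=> [i|]; first by right; split=> //; exact: block_enum_lt.
  split=> [[[|k'] j' hb|//]|].
      by exists j'.+1; right; split=> //; exact: leq_block_enum.
    by case: hb => [|[_]]; lia.
  split=> [m' hm i i' hii'|]; first by apply/hm/(@block_enum_disjoint n m m' i i'); congruence.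
  split=> [t|t b]; first exact: block_start_lt.
  have [bs [hbs hb]] := decoder_surj b (good_block_bound n m t).
  by exists bs; rewrite block_start_diff.
- split=> [i|]; first by left.
  split=> [i|]; first by right; split=> //; apply: cantor_pair_monor; exact: cantor_pair_ltr.
  split=> [[k' j'|//] /= hk'|].
    case: (ltnP k' k.+1) => hk; first by exists 0; left.
    exists j'.+1; right; split; first lia.
    exact: leq_trans (leq_cantor_pair_r m j'.+1) (leq_cantor_pair_r _ _).
  split=> [m' hm i i' [/cantor_pair_inj [_ /cantor_pair_inj [/hm]]] //|].
  by split=> // t; exact: head_surj.
- split=> //; split=> [i|].
    by left; have := good_row_lt n m i; have := good_row_gt n m i; lia.
  split=> [[k' j'|//] _|].
    by exists k'; left; have := good_row_gt n m k'; lia.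
  split=> [m' hm i i' [_ /cantor_pair_inj [/cantor_pair_inj [_ /hm]]] //|].
  by split=> // t; exact: head_surj.
Qed.

Lemma q_coherent n m alpha a t : is_limit alpha ->
  eval (term_q n (oadd alpha m)) a
  = g (rcond q) alpha n m t (fun zeta => eval (term_q n.+1 zeta) a).
Proof.
rewrite /g; case: alpha => [[|[|k]] j [//] _ ->|j ->] /=.
- rewrite add0n (map_comp (fun x => eval (p n.+1 x) a)) block_enum_block;
    last exact: block_size_gt0.
  exact/esym/decoder_window/good_block_bound.
- by rewrite subSnn /= level_term_descend.
- rewrite subSnn /= add0n; case e: (good_row n m t - n.+1) => [|K].
    by have := good_row_gt n m t; lia.
  by rewrite -e level_term_top.
Qed.

Lemma q_depends n alpha :
  olt alpha omega_omega -> depends_only (fun v => v.1 < n) (term_q n alpha).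
Proof.
by case: alpha => [[|k] j _|j]; [exact: p_depends | exact: level_term_depends | rewrite /= ltn0].
Qed.

End Construction.

Theorem mainTheorem16 (p : nat -> nat -> term) :
  (forall n m, depends_only (fun v => (v.1 < n)%N) (p n m)) ->
  (forall n M, exists m, (M < m)%N /\ teq (p n m) zero_term) ->
  (forall i j N, exists n, (N < n)%N /\
     forall M, exists ms : seq nat,
       ms <> [::] /\ all (fun m => (M < m)%N) ms /\
       determined (var_term i j) [seq p n m | m <- ms]) ->
  exists q : Relt, in_R_oo q /\ forall n m, teq (rterm q n (OFin 0 m)) (p n m).
Proof.
move=> p_depends p_zero p_determines; exists (q p); split=> //.
split; first exact: q_cond_ok p_zero p_determines.
split; first by move=> n m a; rewrite /= add0n.
split; first exact: q_depends p_depends.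
by move=> n m alpha hlim; exists 0 => a t _; exact: q_coherent.
Qed.
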